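(* Let $V_{th_1}>0$ (the first-level firing threshold) and $a>0$ (the width of the rectangular surrogate derivative, whose gradient-available interval is $[V_{th_1}-a/2,\,V_{th_1}+a/2]$). Let the value $x$ of a feature map entry normalized by tdBN satisfy $x \sim N(0,(V_{th_1})^2)$. Let $P$ and $P^*$ be the probabilities that a spike (of value $1$) arriving from the shortcut connection leads to a dormant unit in spiking ResNet and spiking DS-ResNet respectively, and let $I$ and $I^*$ be the identity-mapping abilities of spiking ResNet and spiking DS-ResNet respectively (all as defined in the context). Then $P^* < P$ and $I^* > I$.
   Context: Setting (single-level firing, $K=1$): a spiking neuron fires when its membrane potential reaches the threshold $V_{th_1}$; its spike derivative is approximated by $h(u)=\frac{1}{a}\mathbf{1}\{|u-V_{th_1}|<a/2\}$. A ''dormant unit'' is a neuron whose membrane potential lies to the right of the gradient-available interval, i.e. exceeds $V_{th_1}+a/2$, so that its surrogate derivative is zero. The residual-branch feature map value $x$ and the shortcut spike are treated as independent, and residual membrane potential from earlier timesteps is ignored. In spiking ResNet the activation is applied after adding the shortcut spike to the residual branch, so the pre-activation value is $1+x$ when a shortcut spike is present; in spiking DS-ResNet the activation is applied to the residual branch before the addition, so the pre-activation value is $x$. Accordingly, $P=\Pr(1+x>V_{th_1}+a/2)$ and $P^*=\Pr(x>V_{th_1}+a/2)$. Identity-mapping ability is measured as the probability that the block's output reflects whether a shortcut spike is present: for spiking ResNet the output (spike iff $\text{shortcut}+x\ge V_{th_1}$) depends on the shortcut spike exactly when $V_{th_1}-1<x<V_{th_1}$, so $I=\Pr(V_{th_1}-1<x<V_{th_1})$;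 for spiking DS-ResNet the shortcut spike is added directly to the output, so every input spike is mapped to the output and $I^*=1$. *)

From HB Require Import structures.
From mathcomp Require Import all_boot all_order all_algebra.
From mathcomp Require Import all_classical all_reals all_analysis.
Set Implicit Arguments. Unset Strict Implicit. Unset Printing Implicit Defensive.
Import Order.TTheory GRing.Theory Num.Theory.
Local Open Scope classical_set_scope.
Local Open Scope ring_scope.

(* x ~ N(0, Vth^2): law of x is normal_prob 0 Vth (mean 0, std. dev. Vth). *)

Definition P_resnet {R : realType} (Vth a : R) : \bar R :=
  normal_prob 0 Vth [set x : R | Vth + a / 2 < 1 + x].

Definition P_dsresnet {R : realType} (Vth a : R) : \bar R :=
  normal_prob 0 Vth [set x : R | Vth + a / 2 < x].

Definition I_resnet {R : realType} (Vth : R) : \bar R :=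
  normal_prob 0 Vth [set x : R | Vth - 1 < x < Vth].

Definition I_dsresnet {R : realType} (Vth : R) : \bar R := 1%E.

From HB Require Import structures.
From mathcomp Require Import all_boot all_order all_algebra.
From mathcomp Require Import all_classical all_reals all_analysis.
From mathcomp Require Import lra measurable_realfun.
Import Order.TTheory GRing.Theory Num.Theory.
Local Open Scope classical_set_scope.
Local Open Scope ring_scope.

(** Both inequalities come from one fact: the normal law gives positive mass
to every nondegenerate interval, since on a bounded interval its density is
bounded below by a positive constant.  Passing from DS-ResNet to ResNet
enlarges the dormant region [x > c] (with [c = Vth + a/2]) by the interval
[c - 1 < x <= c], and the identity-mapping window [Vth - 1 < x < Vth] misses
the interval [Vth < x < Vth + 1], so it has probability strictly below
[I* = 1]. *)

Lemma sqr_le_itv_bound {R : realFieldType} (b c x : R) :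
  b <= x <= c -> x ^+ 2 <= b ^+ 2 + c ^+ 2.
Proof.
move=> /andP[bx xc]; have := sqr_ge0 b; have := sqr_ge0 c.
by have [x_ge0|x_lt0] := leP 0 x; nra.
Qed.

Lemma lt_measure_setD {d} {T : measurableType d} {R : realType}
    (mu : {finite_measure set T -> \bar R}) (A B : set T) :
  measurable A -> measurable B -> A `<=` B -> (0 < mu (B `\` A))%E ->
  (mu A < mu B)%E.
Proof.
move=> mA mB AB BA_gt0.
rewrite (measureDI mu mB mA) (setIidr AB) lteDr //.
exact: fin_num_measure.
Qed.

Section normal_prob_itv.
Context {R : realType}.
Implicit Types m s b c t u : R.

Lemma normal_prob_itv_gt0 m s b c : s != 0 -> b < c ->
  (0 < normal_prob m s `]b, c[)%E.
Proof.
move=> s0 bc.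
pose k := normal_peak s * expR (- ((b - m) ^+ 2 + (c - m) ^+ 2) / (s ^+ 2 *+ 2)).
have k_gt0 : 0 < k by rewrite mulr_gt0 ?expR_gt0 ?normal_peak_gt0.
apply: (@lt_le_trans _ _ (\int[lebesgue_measure]_(x in `]b, c[) k%:E)%E).
  by rewrite integral_cst //= lebesgue_measure_itv /= lte_fin bc -EFinD
    -EFinM lte_fin mulr_gt0 // subr_gt0.
apply: ge0_le_integral => //.
- by move=> x _; rewrite lee_fin ltW.
- by apply/measurable_EFinP/measurable_funTS; exact: measurable_normal_pdf.
move=> x /=; rewrite in_itv /= => /andP[bx xc].
have sqr_dist_le : (x - m) ^+ 2 <= (b - m) ^+ 2 + (c - m) ^+ 2.
  by apply: sqr_le_itv_bound; rewrite !lerD2r (ltW bx) (ltW xc).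
rewrite lee_fin normal_pdfE // ler_pM2l ?normal_peak_gt0 // /normal_fun.
by rewrite ler_expR !mulNr lerN2 ler_pM2r // invr_gt0 pmulrn_lgt0
  // exprn_even_gt0.
Qed.

Lemma normal_prob_itvoy_lt m s t u : s != 0 -> t < u ->
  (normal_prob m s `]u, +oo[ < normal_prob m s `]t, +oo[)%E.
Proof.
move=> s0 tu; apply: lt_measure_setD => //.
  by apply: subitvP; rewrite subitvE /= bnd_simp ltW.
apply: (lt_le_trans (normal_prob_itv_gt0 m s t u s0 tu)).
apply: le_measure; rewrite ?inE //; first exact: measurableD.
by move=> x /=; rewrite !in_itv /= !andbT => /andP[tx xu]; split; lra.
Qed.

Lemma normal_prob_itv_lt1 m s b c : s != 0 ->
  (normal_prob m s `]b, c[ < 1)%E.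
Proof.
move=> s0; rewrite -(probability_setT (normal_prob m s)).
apply: lt_measure_setD => //.
have c_lt_c1 : c < c + 1 by rewrite ltrDl.
apply: (lt_le_trans (normal_prob_itv_gt0 m s c (c + 1) s0 c_lt_c1)).
apply: le_measure; rewrite ?inE //; first exact: measurableD.
by move=> x /=; rewrite !in_itv /= => /andP[cx _]; split => //; lra.
Qed.

End normal_prob_itv.

Theorem theorem1 (R : realType) (Vth a : R) (hV : 0 < Vth) (ha : 0 < a) :
  (P_dsresnet Vth a < P_resnet Vth a)%E /\ (I_resnet Vth < I_dsresnet Vth)%E.
Proof.
have V0 : Vth != 0 by rewrite gt_eqF.
split.
- rewrite /P_dsresnet /P_resnet -set_itvoy.
  have -> : [set x : R | Vth + a / 2 < 1 + x] = `]Vth + a / 2 - 1, +oo[%classic.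
    by rewrite set_itvoy; apply/seteqP; split => x /=; lra.
  by apply: normal_prob_itvoy_lt => //; lra.
- by rewrite /I_resnet /I_dsresnet -set_itvoo; apply: normal_prob_itv_lt1.
Qed.
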